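(* Let $k$ be an algebraically closed field of characteristic $0$ and $R$ a finitely generated $k$-algebra which is an $n$-Cayley–Hamilton algebra whose trace takes values in $k$. If the Jacobson radical $J$ of $R$ satisfies $R/J\cong M_n(k)$, then $J=0$.
   Context: An algebra with trace over a commutative ring $A$ is an associative unital $A$-algebra $R$ with an $A$-linear map $t:R\to R$ such that $t(a)b=bt(a)$, $t(ab)=t(ba)$ and $t(t(a)b)=t(a)t(b)$. The formal $n$-characteristic polynomial of $a$ is $\chi^n_a(x)=x^n+\sum_{i=1}^nP_i(t(a),\dots,t(a^i))x^{n-i}$ with $P_i$ the universal rational polynomials expressing elementary symmetric functions via power sums. $R$ is an $n$-Cayley–Hamilton algebra if $t(1)=n$ and $\chi^n_a(a)=0$ for all $a\in R$. *)

From HB Require Import structures.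
From mathcomp Require Import all_boot all_order all_algebra.
Set Implicit Arguments. Unset Strict Implicit. Unset Printing Implicit Defensive.
Import GRing.Theory.
Local Open Scope ring_scope.

(* Universal polynomials P_i: elementary symmetric functions in terms of power
   sums (Newton's identities), evaluated at power sums p 1, p 2, ...
   e 0 = 1,  i * e i = \sum_{j=1}^i (-1)^(j-1) e (i-j) p j. *)
Fixpoint newton_e_aux (k : fieldType) (p : nat -> k) (m : nat) : seq k :=
  match m with
  | 0 => [:: 1]
  | m'.+1 =>
      let s := newton_e_aux p m' in
      (* s = [:: e 0; ...; e m'] ; compute e m *)
      let i := m'.+1 in
      rcons s ((i%:R)^-1 *
        \sum_(j < i) ((-1) ^+ j * nth 0 s (i - j.+1) * p j.+1))
  end.

Definition newton_e (k : fieldType) (p : nat -> k) (i : nat) : k :=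
  nth 0 (newton_e_aux p i) i.

(* P_i(p_1,...,p_i): coefficient of x^(n-i) in prod (x - lambda) is (-1)^i e_i *)
Definition P_coef (k : fieldType) (p : nat -> k) (i : nat) : k :=
  (-1) ^+ i * newton_e p i.

(* A trace on R with values in k (t(a) identified with t(a)%:A in R). *)
Definition is_k_trace (k : fieldType) (R : algType k) (t : R -> k) : Prop :=
  (forall (c : k) (a b : R), t (c *: a + b) = c * t a + t b) /\
  (forall a b : R, t (a * b) = t (b * a)).

Definition chi_eval (k : fieldType) (R : algType k) (t : R -> k) (n : nat)
    (a : R) : R :=
  a ^+ n + \sum_(1 <= i < n.+1) P_coef (fun j => t (a ^+ j)) i *: a ^+ (n - i).

Definition cayley_hamilton (k : fieldType) (R : algType k) (t : R -> k)
    (n : nat) : Prop :=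
  is_k_trace t /\ t 1 = n%:R /\ forall a : R, chi_eval t n a = 0.

Definition fin_gen_alg (k : fieldType) (R : algType k) : Prop :=
  exists s : seq R, forall (r : R) (P : R -> Prop),
    P 1 ->
    (forall x y, P x -> P y -> P (x + y)) ->
    (forall x y, P x -> P y -> P (x * y)) ->
    (forall (c : k) x, P x -> P (c *: x)) ->
    (forall g, g \in s -> P g) -> P r.

Definition left_ideal (R : pzRingType) (I : R -> Prop) : Prop :=
  I 0 /\ (forall x y, I x -> I y -> I (x + y)) /\
  (forall r x, I x -> I (r * x)).

Definition maximal_left_ideal (R : pzRingType) (I : R -> Prop) : Prop :=
  left_ideal I /\ ~ I 1 /\
  forall I' : R -> Prop, left_ideal I' -> ~ I' 1 ->
    (forall x, I x -> I' x) -> forall x, I' x -> I x.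

Definition jacobson (R : pzRingType) (a : R) : Prop :=
  forall I : R -> Prop, maximal_left_ideal I -> I a.

From HB Require Import structures.
From mathcomp Require Import all_boot all_order all_algebra.
Import GRing.Theory.
Set Implicit Arguments.
Unset Strict Implicit.
Unset Printing Implicit Defensive.
Local Open Scope ring_scope.

(* Let f : R -> M_N(k) be the surjection with kernel J and r a lift of
   D = diag(0, 1, ..., N - 1).  For any lift a of D, applying f to chi_a(a) = 0
   shows that the monic degree-N polynomial chi_a vanishes at 0, ..., N - 1, so
   chi_a = prod_i (X - i) does not depend on the lift.  Comparing the
   coefficients of X^(N-1) for r and r + x gives t(J) = 0, hence chi_z(z) = z^N
   for z in J: the radical is nil.  Lagrange interpolation at r yields
   idempotents E_j lifting the diagonal matrix units and summing to 1.  For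
   z = E_j x E_j with x in J, the lift r + z of D is annihilated by
   prod_i (X - i), and this forces the nilpotent z to vanish; lifting the
   off-diagonal matrix units then kills every E_j x E_l, so
   x = sum_(j,l) E_j x E_l = 0. *)

Section NewtonIdentities.
Variables (k : fieldType) (p : nat -> k).

Lemma size_newton_e_aux m : size (newton_e_aux p m) = m.+1.
Proof. by elim: m => [|m IHm] //=; rewrite size_rcons IHm. Qed.

Lemma newton_e1 : newton_e p 1 = p 1.
Proof. by rewrite /newton_e /= big_ord1 /= expr0 !mul1r invr1 mul1r. Qed.

Lemma newton_eS_eq0 i : (forall j, p j.+1 = 0) -> newton_e p i.+1 = 0.
Proof.
move=> p0; rewrite /newton_e /= nth_rcons size_newton_e_aux ltnn eqxx.
by rewrite big1 ?mulr0 // => j _; rewrite p0 mulr0.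
Qed.

End NewtonIdentities.

Section HornerAlg.
Variables (k : fieldType) (A : algType k).

Lemma rmorph_horner_alg (B : algType k) (f : {lrmorphism A -> B}) a p :
  f (horner_alg a p) = horner_alg (f a) p.
Proof.
elim/poly_ind: p => [|p c IHp]; first by rewrite !rmorph0.
by rewrite !rmorphD !rmorphM /= !horner_algC !horner_algX IHp rmorph_alg.
Qed.

Lemma horner_alg_eigenvector (a y : A) (c : k) p :
  a * y = c *: y -> horner_alg a p * y = p.[c] *: y.
Proof.
move=> ay; elim/poly_ind: p => [|p b IHp].
  by rewrite rmorph0 mul0r horner0 scale0r.
rewrite rmorphD rmorphM /= horner_algC horner_algX mulrDl -mulrA ay.
by rewrite -scalerAr IHp scalerA mulr_algl !hornerE scalerDl mulrC.
Qed.

(* Downward induction on the nilpotency index: once z^(i+2) = 0, u acts on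
   z^(i+1) as the scalar c, so q(u) acts on it as the unit q(c). *)
Lemma horner_alg_nilpotent_eq0 (u z : A) (c : k) q m :
  q.[c] != 0 -> horner_alg u q * z = 0 -> u * z = c *: z + z ^+ 2 ->
  z ^+ m = 0 -> z = 0.
Proof.
move=> qc0 qz uz; suff zS i : z ^+ i.+2 = 0 -> z ^+ i.+1 = 0.
  case: m => [z0|m]; first by rewrite -[z]mulr1 -(expr0 z) z0 mulr0.
  by elim: m => [|m IHm] zm; [rewrite expr1 in zm | exact/IHm/zS].
move=> zi2; have uzi : u * z ^+ i.+1 = c *: z ^+ i.+1.
  by rewrite exprS mulrA uz mulrDl -exprD add2n zi2 addr0 -scalerAl -exprS.
move: (horner_alg_eigenvector q uzi); rewrite exprS mulrA qz mul0r.
by move/esym/eqP; rewrite scaler_eq0 (negPf qc0) => /eqP.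
Qed.

End HornerAlg.

Lemma horner_alg_diag_mx (k : fieldType) n (d : 'rV[k]_n.+1) p :
  horner_alg (diag_mx d) p = diag_mx (map_mx (horner p) d).
Proof. by rewrite -horner_mx_diag -{1}(horner_mx_X (diag_mx d)) -poly_alg_initial. Qed.

Lemma size_monic_subr (k : fieldType) (p q : {poly k}) :
  p \is monic -> q \is monic -> size p = size q -> (size (p - q)%R < size p)%N.
Proof.
move=> mp mq eq_pq; have sp_gt0 : (0 < size p)%N by rewrite size_poly_gt0 monic_neq0.
rewrite -(prednK sp_gt0) ltnS; apply/leq_sizeP => j le_j; rewrite coefB.
have [->|ne_j] := eqVneq j (size p).-1.
  by have := monicP mp; have := monicP mq; rewrite /lead_coef -eq_pq => -> ->; rewrite subrr.
have le_pj : (size p <= j)%N by rewrite -(prednK sp_gt0) ltn_neqAle eq_sym ne_j.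
by rewrite !nth_default ?subrr // -eq_pq.
Qed.

Section Nodes.
Variables (k : fieldType) (n : nat).
Hypothesis k_pchar0 : [pchar k] =i pred0.

Lemma natf_inj : injective (fun i : nat => i%:R : k).
Proof.
move=> i j /=; wlog le_ij : i j / (i <= j)%N.
  by move=> W; case: (leqP i j) => [/W // | /ltnW le_ji /esym /(W _ _ le_ji) ->].
move=> eq_ij; have := (pcharf0P _).1 k_pchar0 (j - i)%N.
rewrite natrB // eq_ij subrr eqxx subn_eq0 => /esym le_ji.
by apply/eqP; rewrite eqn_leq le_ij le_ji.
Qed.

Definition nodes : seq k := [seq i%:R | i <- iota 0 n].

Definition node_poly : {poly k} := \prod_(c <- nodes) ('X - c%:P).

Definition lagrange_poly (j : nat) : {poly k} :=
  \prod_(c <- rem (j%:R : k) nodes) ('X - c%:P).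

Lemma uniq_nodes : uniq nodes.
Proof. by rewrite map_inj_uniq ?iota_uniq //; exact: natf_inj. Qed.

Lemma size_nodes : size nodes = n.
Proof. by rewrite size_map size_iota. Qed.

Lemma mem_nodes i : (i < n)%N -> i%:R \in nodes.
Proof. by move=> lt_in; apply/mapP; exists i; rewrite // mem_iota. Qed.

Lemma poly_eq0_at_nodes (p : {poly k}) :
  (size p <= n)%N -> (forall i, (i < n)%N -> p.[i%:R] = 0) -> p = 0.
Proof.
move=> sp p0; apply: (roots_geq_poly_eq0 (rs := nodes)); rewrite ?size_nodes //.
  by apply/allP => c /mapP [i]; rewrite mem_iota add0n => /andP [_ /p0 pi] ->; rewrite /root pi.
exact: uniq_nodes.
Qed.

Lemma monic_node_poly : node_poly \is monic.
Proof. exact: monic_prod_XsubC. Qed.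

Lemma size_node_poly : size node_poly = n.+1.
Proof. by rewrite size_prod_XsubC size_nodes. Qed.

Lemma root_node_poly i : (i < n)%N -> node_poly.[i%:R] = 0.
Proof. by move=> lt_in; apply/eqP; rewrite -/(root _ _) root_prod_XsubC mem_nodes. Qed.

Lemma node_poly_lagrange j :
  (j < n)%N -> node_poly = ('X - (j%:R)%:P) * lagrange_poly j.
Proof. by move=> lt_jn; rewrite /node_poly (big_rem _ (mem_nodes lt_jn)). Qed.

Lemma size_lagrange_poly j : (j < n)%N -> size (lagrange_poly j) = n.
Proof.
move=> lt_jn; rewrite size_prod_XsubC size_rem ?mem_nodes // size_nodes.
by rewrite prednK // (leq_ltn_trans _ lt_jn).
Qed.

Lemma lagrange_poly_node_neq0 j : (lagrange_poly j).[j%:R] != 0.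
Proof.
by rewrite -/(root _ _) root_prod_XsubC mem_rem_uniqF // uniq_nodes.
Qed.

Lemma lagrange_poly_node_eq0 i j :
  (i < n)%N -> i != j -> (lagrange_poly j).[i%:R] = 0.
Proof.
move=> lt_in neq_ij; apply/eqP; rewrite -/(root _ _) root_prod_XsubC.
rewrite (mem_rem_uniq _ uniq_nodes) inE mem_nodes // andbT.
by apply: contra neq_ij => /eqP /natf_inj ->.
Qed.

Lemma sum_lagrange_poly : (0 < n)%N ->
  \sum_(j < n) ((lagrange_poly j).[j%:R])^-1 *: lagrange_poly j = 1.
Proof.
move=> n_gt0; apply/eqP; rewrite -subr_eq0; apply/eqP; apply: poly_eq0_at_nodes.
  rewrite (leq_trans (size_polyD _ _)) // geq_max size_polyN size_poly1 n_gt0 andbT.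
  rewrite (leq_trans (size_sum _ _ _)) //; apply/bigmax_leqP => j _.
  by rewrite (leq_trans (size_scale_leq _ _)) ?size_lagrange_poly.
move=> i lt_in; rewrite hornerD hornerN hornerC horner_sum (bigD1 (Ordinal lt_in)) //=.
rewrite big1 ?addr0 => [|j ne_ji]; last first.
  by rewrite hornerZ (lagrange_poly_node_eq0 (j := j) lt_in) ?mulr0 // eq_sym.
by rewrite hornerZ mulVf ?subrr ?lagrange_poly_node_neq0.
Qed.

End Nodes.

Section FormalCharPoly.
Variables (k : fieldType) (R : algType k) (t : R -> k).

Definition char_poly_formal n (a : R) : {poly k} :=
  'X^n + \poly_(m < n) P_coef (fun j => t (a ^+ j)) (n - m).

Lemma chi_evalE n a : chi_eval t n a = horner_alg a (char_poly_formal n a).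
Proof.
rewrite /chi_eval rmorphD rmorphXn /= horner_algX poly_def rmorph_sum.
rewrite big_nat_rev big_add1 /= big_mkord; congr (_ + _); apply: eq_bigr => m _.
by rewrite !subSS subKn 1?ltnW // linearZ /= rmorphXn /= horner_algX mulr_algl.
Qed.

Lemma coef_char_poly_formal n a : (char_poly_formal n.+1 a)`_n = - t a.
Proof.
rewrite coefD coefXn ltn_eqF // add0r coef_poly ltnSn subSnn.
by rewrite /P_coef newton_e1 expr1 mulN1r.
Qed.

End FormalCharPoly.

Section LiftToMatrices.
Variables (k : fieldType) (R : algType k) (t : R -> k) (n : nat).
Variable f : R -> 'M[k]_n.+1.
Hypothesis fD : forall x y, f (x + y) = f x + f y.
Hypothesis fM : forall x y, f (x * y) = f x *m f y.
Hypothesis f1 : f 1 = 1%:M.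
Hypothesis fZ : forall (c : k) x, f (c *: x) = c *: f x.

HB.instance Definition _ :=
  GRing.isSemilinear.Build k R 'M[k]_n.+1 *:%R f (fZ, fD).
HB.instance Definition _ :=
  GRing.isMonoidMorphism.Build R 'M[k]_n.+1 f (conj f1 fM).

Hypothesis k_pchar0 : [pchar k] =i pred0.
Hypothesis tD : {morph t : a b / a + b}.
Hypothesis chi_eval_eq0 : forall a, chi_eval t n.+1 a = 0.

Definition diag_nat : 'M[k]_n.+1 := diag_mx (\row_(i < n.+1) i%:R).

Lemma f_horner_alg_lift a p :
  f a = diag_nat -> f (horner_alg a p) = diag_mx (\row_(i < n.+1) p.[i%:R]).
Proof.
move=> fa; rewrite rmorph_horner_alg /= fa horner_alg_diag_mx.
by congr diag_mx; apply/rowP => i; rewrite !mxE.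
Qed.

Lemma char_poly_formal_lift a :
  f a = diag_nat -> char_poly_formal t n.+1 a = node_poly k n.+1.
Proof.
move=> fa; apply/eqP; rewrite -subr_eq0; apply/eqP.
apply: (poly_eq0_at_nodes (n := n.+1) k_pchar0) => [|i lt_in]; last first.
  rewrite hornerD hornerN root_node_poly // subr0.
  have := congr1 f (chi_eval_eq0 a); rewrite chi_evalE f_horner_alg_lift // rmorph0.
  by move=> /matrixP /(_ (Ordinal lt_in) (Ordinal lt_in)); rewrite !mxE eqxx mulr1n.
rewrite /char_poly_formal addrAC (leq_trans (size_polyD _ _)) //.
rewrite geq_max size_poly andbT -opprB size_polyN.
by rewrite -ltnS -(size_node_poly k n.+1) size_monic_subr ?monic_node_poly
  ?monicXn // size_node_poly size_polyXn.
Qed.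

Lemma horner_node_poly_lift a :
  f a = diag_nat -> horner_alg a (node_poly k n.+1) = 0.
Proof. by move=> fa; rewrite -(char_poly_formal_lift fa) -chi_evalE. Qed.

Variable r : R.
Hypothesis fr : f r = diag_nat.

Lemma trace_ker x : f x = 0 -> t x = 0.
Proof.
move=> fx; have frx : f (r + x) = diag_nat by rewrite fD fr fx addr0.
have := congr1 (coefp n) (char_poly_formal_lift frx).
rewrite -(char_poly_formal_lift fr) /= !coef_char_poly_formal tD opprD => /eqP.
by rewrite -subr_eq0 addrAC subrr add0r oppr_eq0 => /eqP.
Qed.

Lemma ker_nilpotent z : f z = 0 -> z ^+ n.+1 = 0.
Proof.
move=> fz; rewrite -(chi_eval_eq0 z) /chi_eval big_nat big1 ?addr0 // => -[//|i] _.
rewrite /P_coef newton_eS_eq0 ?mulr0 ?scale0r // => j.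
by rewrite trace_ker // rmorphXn /= fz exprS mul0r.
Qed.

Definition diag_unit_lift j : R :=
  ((lagrange_poly k n.+1 j).[j%:R])^-1 *: horner_alg r (lagrange_poly k n.+1 j).

Local Notation E := diag_unit_lift.

Lemma eigen_diag_unit_lift j : (j < n.+1)%N -> r * E j = j%:R *: E j.
Proof.
move=> lt_jn; have := horner_node_poly_lift fr.
rewrite (node_poly_lagrange k lt_jn) rmorphM rmorphB /= horner_algX horner_algC.
rewrite mulrBl mulr_algl => /eqP; rewrite subr_eq0 => /eqP rL.
by rewrite /diag_unit_lift -scalerAr rL !scalerA mulrC.
Qed.

Lemma diag_unit_lift_idem j : (j < n.+1)%N -> E j * E j = E j.
Proof.
move=> lt_jn; rewrite {1}/diag_unit_lift -scalerAl.
rewrite (horner_alg_eigenvector _ (eigen_diag_unit_lift lt_jn)) scalerA.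
by rewrite mulVf ?scale1r // lagrange_poly_node_neq0.
Qed.

Lemma sum_diag_unit_lift : \sum_(j < n.+1) E j = 1.
Proof.
rewrite -(rmorph1 (horner_alg r)) -(sum_lagrange_poly k_pchar0 (ltn0Sn n)).
by rewrite rmorph_sum; apply: eq_bigr => j _; rewrite [RHS]linearZ /= mulr_algl.
Qed.

Lemma f_diag_unit_lift (j : 'I_n.+1) : f (E j) = delta_mx j j.
Proof.
rewrite /diag_unit_lift fZ f_horner_alg_lift //; apply/matrixP => i l; rewrite !mxE.
have [<-|ne_il] := eqVneq i l; last first.
  by rewrite mulr0n mulr0; case: eqP => // eq_ij; rewrite -eq_ij eq_sym (negPf ne_il).
rewrite mulr1n andbb; have [->|ne_ij] := eqVneq i j.
  by rewrite mulVf ?lagrange_poly_node_neq0.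
by rewrite (lagrange_poly_node_eq0 k_pchar0 (ltn_ord i)) ?mulr0.
Qed.

Lemma corner_ker x j : f x = 0 -> (j < n.+1)%N -> E j * x * E j = 0.
Proof.
(* r + z is another lift of diag_nat, and it acts on the corner element z as
   j + z. *)
move=> fx lt_jn; set e := E j; set z := e * x * e.
have fz : f z = 0 by rewrite /z !fM fx mulmx0 mul0mx.
have ez : e * z = z by rewrite /z !mulrA diag_unit_lift_idem.
have ze : z * e = z by rewrite /z -mulrA diag_unit_lift_idem.
have rz : r * z = j%:R *: z.
  by rewrite -ez mulrA eigen_diag_unit_lift // -scalerAl.
have fu : f (r + z) = diag_nat by rewrite fD fr fz addr0.
have uez : (r + z - j%:R%:A) * e = z.
  by rewrite mulrBl mulrDl eigen_diag_unit_lift // ze mulr_algl addrAC subrr add0r.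
apply: (horner_alg_nilpotent_eq0 (u := r + z) (c := j%:R)
  (lagrange_poly_node_neq0 n.+1 k_pchar0 j) _ _ (ker_nilpotent fz)).
  have := horner_node_poly_lift fu; rewrite (node_poly_lagrange k lt_jn) mulrC.
  rewrite rmorphM rmorphB /= horner_algX horner_algC => Lu.
  by rewrite -[X in _ * X]uez mulrA Lu mul0r.
by rewrite mulrDl rz expr2.
Qed.

Hypothesis f_surj : forall M, exists a, f a = M.

Lemma corner_ker_offdiag x (j l : 'I_n.+1) : f x = 0 -> E j * x * E l = 0.
Proof.
move=> fx; have [v fv] := f_surj (delta_mx l j); have [w fw] := f_surj (delta_mx j l).
set m := E l * v * E j * w * E l.
have fm : f (m - E l) = 0.
  by rewrite rmorphB /= /m !fM !f_diag_unit_lift fv fw !mul_delta_mx subrr.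
have := corner_ker fm (ltn_ord l); rewrite mulrBr mulrBl !diag_unit_lift_idem //.
rewrite /m !mulrA diag_unit_lift_idem // -!mulrA diag_unit_lift_idem // => /eqP.
rewrite subr_eq0 !mulrA => /eqP em.
have h : E j * (x * E l * v) * E j = 0.
  by apply: corner_ker (ltn_ord j); rewrite !fM fx !mul0mx.
by rewrite -em !mulrA; rewrite !mulrA in h; rewrite h !mul0r.
Qed.

Lemma ker_eq0 x : f x = 0 -> x = 0.
Proof.
move=> fx; rewrite -[x]mul1r -[1 * x]mulr1 -sum_diag_unit_lift !mulr_suml.
by rewrite big1 // => j _; rewrite mulr_sumr big1 // => l _; rewrite corner_ker_offdiag.
Qed.

End LiftToMatrices.

Theorem corollary3p4 (k : closedFieldType) (n : nat) (R : algType k)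
    (t : R -> k) :
  [pchar k] =i pred0 ->
  fin_gen_alg R ->
  cayley_hamilton t n ->
  (exists f : R -> 'M[k]_n,
      (forall x y, f (x + y) = f x + f y) /\
      (forall x y, f (x * y) = f x *m f y) /\
      f 1 = 1%:M /\
      (forall (c : k) x, f (c *: x) = c *: f x) /\
      (forall M, exists x, f x = M) /\
      (forall x, f x = 0 <-> jacobson x)) ->
  forall x : R, jacobson x -> x = 0.
Proof.
case: n => [|n] k_pchar0 _ [[t_lin _] [_ chi_eval0]].
  have := chi_eval0 1; rewrite /chi_eval expr0 big_geq // addr0 => one_eq0.
  by move=> _ x _; rewrite -[x]mulr1 one_eq0 mulr0.
move=> [f [fD [fM [f1 [fZ [f_surj f_ker]]]]]] x /f_ker fx.
have tD : {morph t : a b / a + b} by move=> a b; rewrite -[a]scale1r t_lin mul1r scale1r.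
have [r fr] := f_surj (diag_nat k n).
exact: (ker_eq0 fD fM f1 fZ k_pchar0 tD chi_eval0 fr f_surj fx).
Qed.
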